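(* Let $p,q\in[1,\infty]$ and consider the identity functor on the category of finitely encoded one-parameter persistence modules over $\mathbb R$, viewed as a functor from this category with amplitude $\rho_p$ to the same category with amplitude $\rho_q$. Then $\rho_q(M)\le\rho_p(M)$ for all $M$ (i.e. the identity is amplitude-bounding with constant $K=1$) if and only if $p\le q$. Moreover, if $p>q$, there is no $K\ge0$ with $\rho_q(M)\le K\rho_p(M)$ for all $M$.
   Context: Finitely encoded persistence modules over $\mathbb R$ (functors from $\mathbb R$ to finite-dimensional vector spaces that are pullbacks of modules over a finite poset along an order-preserving map) form an abelian category, and each is isomorphic to a finite direct sum of interval modules $\mathbb I\langle b_j,d_j\rangle$ (the field on an interval with endpoints $b_j\le d_j$, each end open or closed, zero elsewhere). The $p$-norm amplitude is $\rho_p(M)=(\sum_j|d_j-b_j|^p)^{1/p}$ for $p<\infty$ and $\rho_\infty(M)=\max_j|d_j-b_j|$. *)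

From mathcomp Require Import all_boot all_order all_algebra.
From mathcomp Require Import boolp classical_sets reals constructive_ereal ereal exp.
Set Implicit Arguments. Unset Strict Implicit. Unset Printing Implicit Defensive.
Import Order.TTheory GRing.Theory Num.Theory.
Local Open Scope ring_scope.

(* The space at t is k^(pdim t) (row vectors), and the structure map
   M(s <= t) acts by v |-> v *m pmap s t.  (pmap s t for s > t is irrelevant.) *)
Record pmod (k : fieldType) (R : realType) := PMod {
  pdim : R -> nat;
  pmap : forall s t : R, 'M[k]_(pdim s, pdim t) }.

Definition is_pmod (k : fieldType) (R : realType) (M : pmod k R) : Prop :=
  (forall t, pmap M t t = 1%:M) /\
  (forall s t u, s <= t -> t <= u -> pmap M s t *m pmap M t u = pmap M s u).

Definition pmod_iso (k : fieldType) (R : realType) (M N : pmod k R) : Prop :=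
  exists f : forall t, 'M[k]_(pdim M t, pdim N t),
    (forall t, exists g : 'M[k]_(pdim N t, pdim M t),
        f t *m g = 1%:M /\ g *m f t = 1%:M) /\
    (forall s t, s <= t -> pmap M s t *m f t = f s *m pmap N s t).

Record fpmod (k : fieldType) (P : finType) := FPMod {
  fdim : P -> nat;
  fmap : forall x y : P, 'M[k]_(fdim x, fdim y) }.

Definition is_fpmod (k : fieldType) (P : finType) (le : rel P) (N : fpmod k P) : Prop :=
  (forall x, fmap N x x = 1%:M) /\
  (forall x y z, le x y -> le y z -> fmap N x y *m fmap N y z = fmap N x z).

Definition is_partial_order (P : finType) (le : rel P) : Prop :=
  reflexive le /\ antisymmetric le /\ transitive le.

Definition pullback (k : fieldType) (R : realType) (P : finType) (pi : R -> P)
  (N : fpmod k P) : pmod k R :=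
  @PMod k R (fun t => fdim N (pi t)) (fun s t => fmap N (pi s) (pi t)).

Definition finitely_encoded (k : fieldType) (R : realType) (M : pmod k R) : Prop :=
  exists (P : finType) (le : rel P), is_partial_order le /\
  exists pi : R -> P, (forall s t, s <= t -> le (pi s) (pi t)) /\
  exists N : fpmod k P, is_fpmod le N /\ pmod_iso M (pullback pi N).

Record bar (R : realType) := Bar {
  bb : \bar R; bd : \bar R; bclosed : bool; dclosed : bool }.

Definition wf_bar (R : realType) (I : bar R) : bool :=
  [&& (bb I <= bd I)%E, bb I != +oo%E & bd I != -oo%E].

Definition in_bar (R : realType) (I : bar R) (t : R) : bool :=
  (if bclosed I then (bb I <= t%:E)%E else (bb I < t%:E)%E) &&
  (if dclosed I then (t%:E <= bd I)%E else (t%:E < bd I)%E).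

Definition bar0 (R : realType) : bar R := @Bar R 0%E 0%E false false.

Definition bidx (R : realType) (B : seq (bar R)) (t : R) : seq nat :=
  [seq j <- iota 0 (size B) | in_bar (nth (bar0 R) B j) t].

(* The direct sum of the interval modules of B: at t the basis is indexed by
   the bars containing t, and the structure map sends the basis vector of bar j
   to the basis vector of bar j (or 0 if bar j does not contain the target). *)
Definition barmod (k : fieldType) (R : realType) (B : seq (bar R)) : pmod k R :=
  @PMod k R (fun t => size (bidx B t))
    (fun s t => \matrix_(a, b) ((nth 0%N (bidx B s) a == nth 0%N (bidx B t) b)%:R)).

Definition has_barcode (k : fieldType) (R : realType) (M : pmod k R) (B : seq (bar R)) : Prop :=
  all (@wf_bar R) B /\ pmod_iso M (barmod k B).

Definition blen (R : realType) (I : bar R) : \bar R := `|bd I - bb I|%E.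

Definition rho (R : realType) (p : \bar R) (B : seq (bar R)) : \bar R :=
  if p == +oo%E then (\big[maxe/0%E]_(I <- B) blen I)%E
  else if all (fun I => blen I \is a fin_num) B
  then ((\sum_(I <- B) (fine (blen I)) `^ (fine p)) `^ (fine p)^-1)%:E
  else +oo%E.

Definition id_amp_bounding (k : fieldType) (R : realType) (p q : \bar R) (K : R) : Prop :=
  forall M : pmod k R, is_pmod M -> finitely_encoded M ->
  forall B, has_barcode M B -> (rho q B <= K%:E * rho p B)%E.

From Pilot Require Import Defs.
From mathcomp Require Import all_boot all_order all_algebra.
From mathcomp Require Import boolp classical_sets reals constructive_ereal ereal exp.
From mathcomp Require Import lra.
Import Order.TTheory GRing.Theory Num.Theory.
Local Open Scope ring_scope.

(* For p <= q the q-norm of a nonnegative finite sequence is at most its p-norm S: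
   every entry x satisfies x <= S, so sum x^q <= S^(q-p) * sum x^p = S^q.  Hence
   rho_q <= rho_p on every barcode.  Conversely, n copies of the unit interval [0, 1]
   form a module that is finitely encoded over a three-element chain (t < 0,
   0 <= t <= 1, t > 1); its amplitudes are rho_p = n^(1/p) and rho_q = n^(1/q), and
   for q < p the ratio n^(1/q - 1/p) is unbounded in n. *)

Section PNorm.
Context {R : realType}.

Lemma powRK (x p : R) : 0 <= x -> p != 0 -> (x `^ p) `^ p^-1 = x.
Proof. by move=> x0 p0; rewrite -powRrM mulfV // powRr1. Qed.

Lemma powRVK (x p : R) : 0 <= x -> p != 0 -> (x `^ p^-1) `^ p = x.
Proof. by move=> x0 p0; rewrite -powRrM mulVf // powRr1. Qed.

Lemma sumr_powR_ge0 (l : seq R) (p : R) : 0 <= \sum_(x <- l) x `^ p.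
Proof. by apply: sumr_ge0 => x _; apply: powR_ge0. Qed.

Definition pnorm (l : seq R) (p : R) : R := (\sum_(x <- l) x `^ p) `^ p^-1.

Lemma pnorm_ge_mem (l : seq R) (p x : R) : 0 < p -> x \in l ->
  {in l, forall y, 0 <= y} -> x <= pnorm l p.
Proof.
move=> p0 xl l0; rewrite -[x in x <= _](@powRK x p) ?l0 ?gt_eqF //.
apply: ge0_ler_powR; rewrite ?nnegrE ?invr_ge0 ?sumr_powR_ge0 ?powR_ge0 ?(ltW p0) //.
by rewrite (big_rem x) //= lerDl sumr_powR_ge0.
Qed.

Lemma pnorm_antitone (l : seq R) (p q : R) : 1 <= p -> p <= q ->
  {in l, forall y, 0 <= y} -> pnorm l q <= pnorm l p.
Proof.
move=> p1 pq l0; have q0 : 0 < q by lra.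
have le_pnorm : {in l, forall y, y <= pnorm l p}.
  by move=> y yl; apply: pnorm_ge_mem => //; lra.
have pnorm_p : pnorm l p `^ p = \sum_(y <- l) y `^ p.
  by rewrite powRVK ?sumr_powR_ge0 // gt_eqF //; lra.
have pnorm_ge0 : 0 <= pnorm l p by apply: powR_ge0.
move: (pnorm l p) pnorm_ge0 le_pnorm pnorm_p => S S0 le_S S_p.
have powR_split x : x `^ q = x `^ p * x `^ (q - p).
  by rewrite -powRD addrC subrK // gt_eqF ?implybT.
have sum_le : \sum_(y <- l) y `^ q <= S `^ q.
  rewrite (powR_split S) S_p mulr_suml !big_seq.
  apply: ler_sum => y yl; rewrite powR_split.
  apply: ler_wpM2l; first exact: powR_ge0.
  by apply: ge0_ler_powR; rewrite ?nnegrE ?subr_ge0 ?S0 ?(l0 y yl) ?(le_S y yl).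
rewrite -(@powRK S q) ?gt_eqF //.
by apply: ge0_ler_powR; rewrite ?nnegrE ?invr_ge0 ?sumr_powR_ge0 ?powR_ge0 ?(ltW q0).
Qed.

Lemma exists_nat_powR_gt (K a : R) : 0 < a -> exists2 n : nat, (0 < n)%N & K < n%:R `^ a.
Proof.
move=> a0; set x := (`|K| + 1) `^ a^-1.
exists (Num.trunc x).+1 => //.
apply: (lt_le_trans (y := `|K| + 1)); first by have := ler_norm K; lra.
rewrite -[_ + 1](@powRVK _ a) ?gt_eqF ?addr_ge0 //.
apply: ge0_ler_powR; rewrite ?nnegrE ?ler0n ?powR_ge0 ?(ltW a0) //.
exact/ltW/truncnS_gt.
Qed.

End PNorm.

Section Amplitude.
Context {R : realType}.
Implicit Types (B : seq (bar R)) (p q : \bar R).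

Definition bar_lengths B : seq R := [seq fine (blen b) | b <- B].

Lemma bar_lengths_ge0 B : {in bar_lengths B, forall x, 0 <= x}.
Proof.
apply/allP; rewrite all_map.
by elim: B => //= b B ->; rewrite andbT fine_ge0 ?abse_ge0.
Qed.

Lemma rho_finE B p : p != +oo%E -> all (fun b => blen b \is a fin_num) B ->
  rho p B = (pnorm (bar_lengths B) (fine p))%:E.
Proof. by move=> /negbTE p_fin B_fin; rewrite /rho p_fin B_fin /pnorm big_map. Qed.

Lemma rho_antitone B p q : (1 <= p)%E -> (p <= q)%E -> (rho q B <= rho p B)%E.
Proof.
case: p => [p| |]; last 2 first.
- by move=> _; rewrite leye_eq => /eqP ->; exact: le_refl.
- by rewrite leeNy_eq => /eqP one_Ny; discriminate one_Ny.
rewrite lee_fin => p1 pq.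
have p0 : 0 < p by lra.
have [B_fin|B_nfin] := boolP (all (fun b => blen b \is a fin_num) B); last first.
  by rewrite {2}/rho (negbTE B_nfin) leey.
rewrite [rho p%:E B]rho_finE //=.
case: q pq => [q| |] pq; last by move: pq; rewrite leeNy_eq => /eqP p_Ny; discriminate p_Ny.
  by rewrite rho_finE // lee_fin; apply: pnorm_antitone => //; exact: bar_lengths_ge0.
rewrite /rho eqxx -(big_map (@blen R) xpredT id) big_seq.
have lengths_fin : all (fun x => x \is a fin_num) (map (@blen R) B) by rewrite all_map.
apply: bigmax_le => [|x xB]; first by rewrite lee_fin powR_ge0.
rewrite -(fineK (allP lengths_fin x xB)) lee_fin.
apply: pnorm_ge_mem; [lra | | exact: bar_lengths_ge0].
by rewrite /bar_lengths (map_comp fine (@blen R)) map_f.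
Qed.

End Amplitude.

Section SelectionMatrix.
Context {k : fieldType}.

Definition selmx (s1 s2 : seq nat) : 'M[k]_(size s1, size s2) :=
  \matrix_(a, b) ((nth 0%N s1 a == nth 0%N s2 b)%:R).

Lemma selmx1 s : uniq s -> selmx s s = 1%:M.
Proof. by move=> s_uniq; apply/matrixP => a b; rewrite !mxE nth_uniq. Qed.

Lemma mul_selmx s1 s2 s3 : uniq s2 -> {in s1, forall j, j \in s3 -> j \in s2} ->
  selmx s1 s2 *m selmx s2 s3 = selmx s1 s3.
Proof.
move=> s2_uniq s2_between; apply/matrixP => a b; rewrite !mxE.
have [e|ne] := eqVneq (nth 0%N s1 a) (nth 0%N s3 b); last first.
  rewrite big1 // => c _; rewrite !mxE.
  by have [<-|] := eqVneq (nth 0%N s1 a) (nth 0%N s2 c); rewrite ?(negbTE ne) ?mulr0 ?mul0r.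
have j_s2 : nth 0%N s1 a \in s2.
  by apply: s2_between; [exact: mem_nth | rewrite e; exact: mem_nth].
have j_idx : (index (nth 0%N s1 a) s2 < size s2)%N by rewrite index_mem.
rewrite (bigD1 (Ordinal j_idx)) //= !mxE nth_index // -e eqxx mulr1 big1 ?addr0 //.
move=> c c_ne; rewrite !mxE.
have [j_c|] := eqVneq (nth 0%N s1 a) (nth 0%N s2 c); last by rewrite mul0r.
by move/negP: c_ne; case; apply/eqP/val_inj; rewrite /= j_c index_uniq.
Qed.

End SelectionMatrix.

Section BarcodeModule.
Context {k : fieldType} {R : realType}.
Implicit Type B : seq (bar R).

Lemma in_bar_convex (I : bar R) (s t u : R) : s <= t -> t <= u ->
  in_bar I s -> in_bar I u -> in_bar I t.
Proof.
rewrite /in_bar -!lee_fin => st tu.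
case: (bclosed I); case: (dclosed I) => /andP[bs _] /andP[_ ud]; apply/andP; split.
all: by [apply: le_trans bs st | apply: lt_le_trans bs st
        | apply: le_trans tu ud | apply: le_lt_trans tu ud].
Qed.

Lemma mem_bidx B t j : (j \in bidx B t) = (j < size B)%N && in_bar (nth (bar0 R) B j) t.
Proof. by rewrite mem_filter mem_iota andbC. Qed.

Lemma uniq_bidx B t : uniq (bidx B t).
Proof. by rewrite filter_uniq // iota_uniq. Qed.

Lemma mem_bidx_between B s t u : s <= t -> t <= u ->
  {in bidx B s, forall j, j \in bidx B u -> j \in bidx B t}.
Proof.
move=> st tu j; rewrite !mem_bidx => /andP[-> js] /andP[_ ju].
exact: in_bar_convex st tu js ju.
Qed.

(* [seq]'s [pmap] shadows the structure map of [pmod]. *)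
Lemma pmap_barmod B s t : Defs.pmap (barmod k B) s t = selmx (bidx B s) (bidx B t).
Proof. by []. Qed.

Lemma barmod_pmod B : is_pmod (barmod k B).
Proof.
split=> [t|s t u st tu]; rewrite !pmap_barmod; first exact: selmx1 (uniq_bidx B t).
by rewrite mul_selmx ?uniq_bidx //; exact: mem_bidx_between.
Qed.

Lemma pmod_iso_refl (M : pmod k R) : pmod_iso M M.
Proof.
exists (fun t => 1%:M); split=> [t|s t _]; last by rewrite mulmx1 mul1mx.
by exists 1%:M; rewrite mulmx1.
Qed.

Lemma barmod_has_barcode B : all (@wf_bar R) B -> has_barcode (barmod k B) B.
Proof. by split; last exact: pmod_iso_refl. Qed.

Lemma barmod_finitely_encoded (P : finType) (le : rel P) (pi : R -> P) (rep : P -> R) B :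
  is_partial_order le -> (forall s t, s <= t -> le (pi s) (pi t)) ->
  (forall x y, le x y -> rep x <= rep y) -> (forall t, bidx B (rep (pi t)) = bidx B t) ->
  finitely_encoded (barmod k B).
Proof.
move=> le_order pi_mono rep_mono rep_pi.
exists P, le; split=> //; exists pi; split=> //.
pose N := @FPMod k P (fun x => size (bidx B (rep x)))
  (fun x y => selmx (bidx B (rep x)) (bidx B (rep y))).
exists N; split.
  split=> [x|x y z /rep_mono xy /rep_mono yz]; first exact: selmx1 (uniq_bidx B _).
  by rewrite /= mul_selmx ?uniq_bidx //; exact: mem_bidx_between.
exists (fun t => selmx (bidx B t) (bidx B (rep (pi t)))); split=> [t|s t st].
  exists (selmx (bidx B (rep (pi t))) (bidx B t)).
  by rewrite !mul_selmx ?selmx1 ?uniq_bidx // => j; rewrite rep_pi.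
by rewrite /= !mul_selmx ?uniq_bidx // => j; rewrite ?rep_pi //; exact: mem_bidx_between.
Qed.

End BarcodeModule.

Section UnitBars.
Context {R : realType}.

Definition unit_bar : bar R := Bar 0%:E 1%:E true true.

Lemma blen_unit_bar : blen unit_bar = 1%E.
Proof. by rewrite /blen /= subr0 normr1. Qed.

Lemma in_unit_bar t : in_bar unit_bar t = (0 <= t <= 1).
Proof. by rewrite /in_bar /= !lee_fin. Qed.

Definition unit_bar_code (t : R) : 'I_3 :=
  inord (if t < 0 then 0 else if t <= 1 then 1 else 2).

Definition unit_bar_rep (x : 'I_3) : R := (x%:R - 1) *+ 2.

Lemma unit_bar_code_mono s t : s <= t -> (unit_bar_code s <= unit_bar_code t)%O.
Proof.
move=> st; rewrite leEord /unit_bar_code.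
by case: (ltP s 0) => s0; case: (ltP t 0) => t0; case: (leP s 1) => s1;
  case: (leP t 1) => t1; rewrite !inordK //; lra.
Qed.

Lemma unit_bar_rep_mono (x y : 'I_3) : (x <= y)%O -> unit_bar_rep x <= unit_bar_rep y.
Proof. by rewrite leEord => xy; rewrite lerMn2r /= lerD2r ler_nat. Qed.

Lemma in_unit_bar_rep_code t :
  in_bar unit_bar (unit_bar_rep (unit_bar_code t)) = in_bar unit_bar t.
Proof.
rewrite !in_unit_bar /unit_bar_rep /unit_bar_code.
by case: (ltP t 0) => t0; [|case: (leP t 1) => t1]; rewrite inordK //=;
  apply/idP/idP; lra.
Qed.

Lemma unit_bars_finitely_encoded (k : fieldType) n :
  finitely_encoded (barmod k (nseq n unit_bar)).
Proof.
apply: (barmod_finitely_encoded _ <=%O _ _ _ _ unit_bar_code_mono unit_bar_rep_mono).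
  by split; [exact: lexx | split; [exact: le_anti | exact: le_trans]].
move=> t; apply: eq_in_filter => j; rewrite mem_iota size_nseq => /andP[_ jn].
by rewrite nth_nseq jn in_unit_bar_rep_code.
Qed.

(* For [p = +oo] the exponent [(fine p)^-1] is [0^-1 = 0]: [n ^ 0 = 1] is the sup-norm. *)
Lemma rho_unit_bars (p : \bar R) n : (0 < n)%N ->
  rho p (nseq n unit_bar) = (n%:R `^ (fine p)^-1)%:E.
Proof.
move=> n0; rewrite /rho all_nseq blen_unit_bar orbT.
case: eqP => [->|_]; rewrite big_nseq blen_unit_bar /=; last by rewrite powR1 iter_addr_0.
rewrite invr0 powRr0; case: n n0 => // n _.
elim: n => [|n /= ->]; last exact: maxxx.
by apply/max_idPl; rewrite lee_fin ler01.
Qed.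

End UnitBars.

Lemma inv_fine_lt (R : realType) (p q : \bar R) : (1 <= q)%E -> (q < p)%E ->
  (fine p)^-1 < (fine q)^-1.
Proof.
case: q => [q| |] q1 qp; last 2 first.
- by move: qp; rewrite ltNge leey.
- by move: q1; rewrite leeNy_eq => /eqP one_Ny; discriminate one_Ny.
rewrite lee_fin in q1; case: p qp => [p| |] qp /=.
- by rewrite lte_fin in qp; rewrite ltf_pV2 ?posrE //; lra.
- by rewrite invr0 invr_gt0; lra.
- by move: qp; rewrite ltNge leNye.
Qed.

Lemma not_id_amp_bounding (k : fieldType) (R : realType) (p q : \bar R) (K : R) :
  (1 <= q)%E -> (q < p)%E -> ~ id_amp_bounding k p q K.
Proof.
move=> q1 qp bounded.
have gap : 0 < (fine q)^-1 - (fine p)^-1 by rewrite subr_gt0 inv_fine_lt.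
have [n n0 Kn] := exists_nat_powR_gt K _ gap.
have n_neq0 : n%:R != 0 :> R by rewrite pnatr_eq0 -lt0n.
have wf_B : all (@wf_bar R) (nseq n unit_bar).
  by rewrite all_nseq /wf_bar /= lee_fin ler01 orbT.
have := bounded _ (barmod_pmod _) (unit_bars_finitely_encoded k n) _
  (barmod_has_barcode _ wf_B).
rewrite !rho_unit_bars // -EFinM lee_fin; apply/negP; rewrite -ltNge.
rewrite -[X in _ < _ `^ X](subrK (fine p)^-1) powRD ?n_neq0 ?implybT //.
by rewrite ltr_pM2r // powR_gt0 // ltr0n.
Qed.

Theorem mainTheorem13 (k : fieldType) (R : realType) (p q : \bar R) :
  (1 <= p)%E -> (1 <= q)%E ->
  (id_amp_bounding k p q 1 <-> (p <= q)%E) /\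
  ((q < p)%E -> forall K : R, 0 <= K -> ~ id_amp_bounding k p q K).
Proof.
move=> p1 q1; split=> [|qp K _]; last exact: not_id_amp_bounding.
split=> [bounded | pq M _ _ B _]; last by rewrite mul1e; exact: rho_antitone.
by rewrite leNgt; apply/negP => qp; exact: not_id_amp_bounding q1 qp bounded.
Qed.
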